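(* Let $A,B$ be hypermatrices of order $n$ with $\Xi(A),\Xi(B)\in\mathcal C_n$. Then $A\preceq_B B$ if and only if $\Delta(A)_{i,j,k}\le\Delta(B)_{i,j,k}$ for all $i,k\in[n]$ and $j\in[ik]$.
   Context: Let $[n]=\{1,\dots,n\}$, $[0,n]=\{0,\dots,n\}$. A hypermatrix of order $n$ is an integer array $A=(A_{i,j,k})_{i,j,k\in[n]}$; $\Xi(A)_{i,j,k}=\sum_{a\le i,b\le j,c\le k}A_{a,b,c}$ for $i,j,k\in[0,n]$. A corner-sum hypermatrix of order $n$ is an integer array $C$ indexed by $[0,n]^3$ such that for all $i,j\in[0,n]$: $C_{i,j,0}=C_{i,0,j}=C_{0,i,j}=0$, $C_{i,j,n}=C_{i,n,j}=C_{n,i,j}=ij$, and for all $k\in[n]$ each of $C_{i,j,k}-C_{i,j,k-1}$, $C_{i,k,j}-C_{i,k-1,j}$, $C_{k,i,j}-C_{k-1,i,j}$ is an integer in $\{\max(0,i+j-n),\dots,\min(i,j)\}$; $\mathcal C_n$ is the set of these. The Bruhat order on such hypermatrices: $A\preceq_B B$ iff $\Xi(A)\ge\Xi(B)$ entrywise (equivalently, $A-B$ is a sum of positive T-blocks). The partial-sum hypermatrix is $P(A)_{i,j,k}=\sum_{a=1}^i\sum_{b=1}^k A_{a,j,b}$ (non-negative whenever $\Xi(A)\in\mathcal C_n$). $\Delta(A)$ is the family of sequences $\Delta(A)_{i,*,k}$, $i,k\in[n]$, in which each $j\in[n]$ occurs exactly $P(A)_{i,j,k}$ times, listed in weakly increasing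 order; this sequence has length $ik$, and $\Delta(A)_{i,j,k}$ denotes its $j$-th entry. *)

From mathcomp Require Import all_boot all_order all_algebra.
Set Implicit Arguments. Unset Strict Implicit. Unset Printing Implicit Defensive.
Import Order.TTheory GRing.Theory Num.Theory.
Local Open Scope ring_scope.

(* A hypermatrix of order n: integer array; only the entries with indices in
   [n] = {1,...,n} are meaningful (the others are never used). *)
Definition hypermatrix := nat -> nat -> nat -> int.

Definition Xi (A : hypermatrix) : hypermatrix := fun i j k =>
  \sum_(1 <= a < i.+1) \sum_(1 <= b < j.+1) \sum_(1 <= c < k.+1) A a b c.

Definition corner_sum (n : nat) (C : hypermatrix) : Prop :=
  (forall i j, (i <= n)%N -> (j <= n)%N ->
     [/\ C i j 0%N = 0, C i 0%N j = 0 & C 0%N i j = 0] /\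
     [/\ C i j n = (i * j)%:Z, C i n j = (i * j)%:Z & C n i j = (i * j)%:Z]) /\
  (forall i j k, (i <= n)%N -> (j <= n)%N -> (1 <= k <= n)%N ->
     let lo := (maxn 0 (i + j - n))%:Z in
     let hi := (minn i j)%:Z in
     [/\ lo <= C i j k - C i j k.-1 <= hi,
         lo <= C i k j - C i k.-1 j <= hi &
         lo <= C k i j - C k.-1 i j <= hi]).

Definition bruhat_le (n : nat) (A B : hypermatrix) : Prop :=
  forall i j k, (i <= n)%N -> (j <= n)%N -> (k <= n)%N -> Xi B i j k <= Xi A i j k.

Definition Psum (A : hypermatrix) : hypermatrix := fun i j k =>
  \sum_(1 <= a < i.+1) \sum_(1 <= b < k.+1) A a j b.

(* Delta(A)_{i,*,k}: the weakly increasing sequence in which each j in [n]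
   occurs exactly P(A)_{i,j,k} times (P(A) is nonnegative under the standing
   hypothesis, so absz is harmless). *)
Definition Delta_seq (n : nat) (A : hypermatrix) (i k : nat) : seq nat :=
  flatten [seq nseq (absz (Psum A i j k)) j | j <- iota 1 n].

Definition Delta (n : nat) (A : hypermatrix) (i j k : nat) : nat :=
  nth 0%N (Delta_seq n A i k) j.-1.

From mathcomp Require Import all_boot all_order all_algebra.
Import Order.TTheory GRing.Theory Num.Theory.

Set Implicit Arguments.
Unset Strict Implicit.
Unset Printing Implicit Defensive.

(* Delta(A)_{i,*,k} is the weakly increasing sequence whose counting function
   j |-> #{entries <= j} is j |-> Xi(A)_{i,j,k}, because P(A) is the
   increment of Xi(A) in its middle index and is nonnegative on C_n.  For
   weakly increasing sequences of equal length, the entries are pointwise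
   smaller iff the counting functions are pointwise larger, since
   s_m <= j <-> m < #{entries <= j}.  Hence comparing the Delta sequences
   entrywise is comparing Xi entrywise in reverse, i.e. the Bruhat order. *)

Section NatSequences.

Lemma sorted_nth_leq_count (s : seq nat) m j : sorted leq s -> m < size s ->
  (nth 0 s m <= j) = (m < count (leq^~ j) s).
Proof.
elim: s m => [|x s IHs] m //= path_xs lt_m_s.
have ge_x : all (leq x) s := order_path_min leq_trans path_xs.
case: (leqP x j) => [le_xj | lt_jx].
  case: m lt_m_s => [|m] /=; rewrite ?le_xj // add1n ltnS.
  exact/IHs/(path_sorted path_xs).
have gt_j y : y \in x :: s -> (y <= j) = false.
  by rewrite inE leqNgt => /predU1P[-> | /(allP ge_x)/(leq_trans lt_jx)->]; rewrite ?lt_jx.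
rewrite gt_j ?mem_nth // (@eq_in_count _ _ pred0) ?count_pred0 // => y s_y.
by apply: gt_j; rewrite inE s_y orbT.
Qed.

Lemma sorted_nth_le_iff_count_ge (sA sB : seq nat) :
  sorted leq sA -> sorted leq sB -> size sA = size sB ->
  (forall j, count (leq^~ j) sB <= count (leq^~ j) sA) <->
  (forall m, m < size sA -> nth 0 sA m <= nth 0 sB m).
Proof.
move=> sorted_sA sorted_sB size_AB; split=> [le_count m lt_m_A | le_nth j].
  rewrite sorted_nth_leq_count //; apply: leq_trans (le_count _).
  by rewrite -sorted_nth_leq_count -?size_AB.
case cB: (count _ sB) => [|c] //.
have lt_c_B : c < size sB by rewrite -cB count_size.
have le_Bc_j : nth 0 sB c <= j by rewrite sorted_nth_leq_count ?cB.
by rewrite -sorted_nth_leq_count ?size_AB // (leq_trans (le_nth _ _)) ?size_AB.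
Qed.

Lemma iota1E m : iota 1 m = index_iota 1 m.+1.
Proof. by rewrite /index_iota subn1. Qed.

Variable c : nat -> nat.

Lemma count_flatten_nseq (s : seq nat) (a : pred nat) :
  count a (flatten [seq nseq (c x) x | x <- s]) = \sum_(x <- s | a x) c x.
Proof.
rewrite count_flatten -map_comp sumnE big_map [RHS]big_mkcond.
by apply: eq_bigr => x _; rewrite /= count_nseq; case: (a x); rewrite ?mul1n.
Qed.

Lemma size_flatten_nseq (s : seq nat) :
  size (flatten [seq nseq (c x) x | x <- s]) = \sum_(x <- s) c x.
Proof. by rewrite -count_predT count_flatten_nseq. Qed.

Lemma path_flatten_nseq (s : seq nat) y :
  path leq y s -> path leq y (flatten [seq nseq (c x) x | x <- s]).
Proof.
elim: s y => [|x s IHs] y //= /andP[le_yx path_xs].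
case: (c x) => [|k] /=; first exact/IHs/(path_le leq_trans le_yx).
have last_nseq_x : last x (nseq k x) = x by elim: k.
rewrite le_yx cat_path last_nseq_x IHs // andbT.
by elim: k {last_nseq_x} => //= k ->; rewrite leqnn.
Qed.

End NatSequences.

Local Open Scope ring_scope.

Section DeltaSequence.

Variables (n : nat) (A : hypermatrix).
Hypothesis corner_A : corner_sum n (Xi A).

Lemma Xi_Psum i j k : Xi A i j k = \sum_(1 <= b < j.+1) Psum A i b k.
Proof. by rewrite /Xi /Psum exchange_big. Qed.

Lemma Psum_ge0 i b k : (i <= n)%N -> (k <= n)%N -> (1 <= b <= n)%N ->
  0 <= Psum A i b k.
Proof.
case: b => // b i_le_n k_le_n b_le_n.
have [_ /andP[lo_le _] _] := corner_A.2 i k b.+1 i_le_n k_le_n b_le_n.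
have -> : Psum A i b.+1 k = Xi A i b.+1 k - Xi A i b k.
  by rewrite !Xi_Psum big_nat_recr //= addrAC subrr add0r.
exact: le_trans _ lo_le.
Qed.

Lemma sum_absz_Psum i j k : (i <= n)%N -> (k <= n)%N -> (j <= n)%N ->
  (\sum_(1 <= b < j.+1) absz (Psum A i b k))%N%:Z = Xi A i j k.
Proof.
move=> i_le_n k_le_n j_le_n; rewrite Xi_Psum (big_morph Posz PoszD (erefl 0%:Z)).
apply: eq_big_nat => b /andP[b_gt0 lt_b_j]; apply: gez0_abs; apply: Psum_ge0 => //.
by rewrite b_gt0 -ltnS (leq_trans lt_b_j).
Qed.

Lemma count_Delta_seq i k j : (i <= n)%N -> (k <= n)%N ->
  (count (leq^~ j) (Delta_seq n A i k))%:Z = Xi A i (minn j n) k.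
Proof.
move=> i_le_n k_le_n; rewrite -sum_absz_Psum ?geq_minr // count_flatten_nseq iota1E.
rewrite (big_nat_widen _ _ _ _ _ (_ : (minn j n).+1 <= n.+1)%N) ?ltnS ?geq_minr //.
congr Posz; apply: congr_big_nat => // b /andP[_ lt_b_n1].
by rewrite ltnS leq_min -[(b <= n)%N]ltnS lt_b_n1 andbT.
Qed.

Lemma size_Delta_seq i k : (i <= n)%N -> (k <= n)%N ->
  size (Delta_seq n A i k) = (i * k)%N.
Proof.
move=> i_le_n k_le_n; apply/eqP; rewrite -eqz_nat size_flatten_nseq iota1E.
have [_ Xi_full _] := (corner_A.1 i k i_le_n k_le_n).2.
by rewrite sum_absz_Psum // Xi_full.
Qed.

Lemma sorted_Delta_seq i k : sorted leq (Delta_seq n A i k).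
Proof. exact/(@path_sorted _ _ 0%N)/path_flatten_nseq/(iota_sorted 0 n.+1). Qed.

End DeltaSequence.

Lemma Xi_slice_le_iff_Delta_le n A B i k :
  corner_sum n (Xi A) -> corner_sum n (Xi B) -> (i <= n)%N -> (k <= n)%N ->
  (forall j, (j <= n)%N -> Xi B i j k <= Xi A i j k) <->
  (forall m, (m < i * k)%N ->
     (nth 0 (Delta_seq n A i k) m <= nth 0 (Delta_seq n B i k) m)%N).
Proof.
move=> corner_A corner_B i_le_n k_le_n.
have size_AB : size (Delta_seq n A i k) = size (Delta_seq n B i k).
  by rewrite !size_Delta_seq.
have := sorted_nth_le_iff_count_ge (sorted_Delta_seq n A i k)
  (sorted_Delta_seq n B i k) size_AB.
rewrite size_Delta_seq //; apply: iff_trans; split=> le_Xi j.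
  by rewrite -lez_nat !count_Delta_seq // le_Xi ?geq_minr.
by move=> j_le_n; rewrite -(minn_idPl j_le_n) -!count_Delta_seq // lez_nat.
Qed.

Theorem mainTheorem20 (n : nat) (A B : hypermatrix) :
  corner_sum n (Xi A) -> corner_sum n (Xi B) ->
  (bruhat_le n A B <->
   (forall i k j, (1 <= i <= n)%N -> (1 <= k <= n)%N -> (1 <= j <= i * k)%N ->
      (Delta n A i j k <= Delta n B i j k)%N)).
Proof.
move=> corner_A corner_B; split=> [le_AB i k j | le_Delta i j k i_le_n j_le_n k_le_n].
  move=> /andP[_ i_le_n] /andP[_ k_le_n] /andP[j_gt0 j_le_ik].
  apply: (Xi_slice_le_iff_Delta_le corner_A corner_B i_le_n k_le_n).1.
    by move=> j' j'_le_n; apply: le_AB.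
  by rewrite prednK.
move: j j_le_n; apply/(Xi_slice_le_iff_Delta_le corner_A corner_B i_le_n k_le_n).
move=> m lt_m_ik.
have /andP[i_gt0 k_gt0] : (0 < i)%N && (0 < k)%N.
  by rewrite -muln_gt0 (leq_ltn_trans _ lt_m_ik).
by apply: (le_Delta i k m.+1); apply/andP.
Qed.
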